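(* Let $\mathbf{A}\in\mathbb{R}^{n\times d}$ with $\mathrm{diag}(\mathbf{A}^T\mathbf{A})=\mathbf{1}$, let $\hat{\mathbf{A}}=[\mathbf{A},-\mathbf{A}]\in\mathbb{R}^{n\times 2d}$ with rows $\hat{\mathbf{a}}_i$, let $y_1,\dots,y_n$ be observations, $\lambda\ge0$, $L$ a non-negative convex loss, and $$F(\mathbf{x})=\sum_{i=1}^n L(\hat{\mathbf{a}}_i^T\mathbf{x},y_i)+\lambda\sum_{j=1}^{2d}x_j,\qquad\mathbf{x}\in\mathbb{R}^{2d}_+.$$ Assume $F$ is convex and there is $\beta>0$ such that for all $\mathbf{x}$ and parallel updates $\Delta\mathbf{x}$ (with $\mathbf{x},\mathbf{x}+\Delta\mathbf{x}\in\mathbb{R}^{2d}_+$), $F(\mathbf{x}+\Delta\mathbf{x})\le F(\mathbf{x})+\Delta\mathbf{x}^T\nabla F(\mathbf{x})+\tfrac{\beta}{2}\Delta\mathbf{x}^T\hat{\mathbf{A}}^T\hat{\mathbf{A}}\Delta\mathbf{x}$. Let $\rho$ be the spectral radius of $\hat{\mathbf{A}}^T\hat{\mathbf{A}}$ and let $P$ be a positive integer with $P<\tfrac{2d}{\rho}+1$. Fix $\mathbf{x}\in\mathbb{R}^{2d}_+$, and for each $j\in\{1,\dots,2d\}$ let $\delta x_j=\max\{-x_j,-(\nabla F(\mathbf{x}))_j/\beta\}$. Let $\mathcal{P}_t$ be a multiset of $P$ indices drawn independently and uniformly from $\{1,\dots,2d\}$, let $\Delta\mathbf{x}$ be the collective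 update $(\Delta\mathbf{x})_k=\sum_{i_j\in\mathcal{P}_t:\,i_j=k}\delta x_{i_j}$, and assume $\mathbf{x}+\Delta\mathbf{x}\in\mathbb{R}^{2d}_+$. Then $$\mathbb{E}_{\mathcal{P}_t}\big[F(\mathbf{x}+\Delta\mathbf{x})-F(\mathbf{x})\big]\le P\,\mathbb{E}_j\Big[\delta x_j(\nabla F(\mathbf{x}))_j+\tfrac{\beta}{2}\Big(1+\tfrac{(P-1)\rho}{2d}\Big)(\delta x_j)^2\Big],$$ where $\mathbb{E}_{\mathcal{P}_t}$ is over the random choice of $\mathcal{P}_t$ and $\mathbb{E}_j$ is over $j$ chosen uniformly at random from $\{1,\dots,2d\}$.
   Context: This is one iteration of Shotgun (parallel stochastic coordinate descent) from the point $\mathbf{x}$: $P$ indices are drawn independently and uniformly, each chosen coordinate receives the Shooting update $\delta x_j$ computed at the same point $\mathbf{x}$, and all are applied simultaneously. Spectral radius means the maximum absolute eigenvalue. (The paper's ''$\mathbf{A}^T\mathbf{A}$'' here acts on the $2d$ duplicated coordinates, i.e. is $\hat{\mathbf{A}}^T\hat{\mathbf{A}}$.) *)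

From HB Require Import structures.
From mathcomp Require Import all_boot all_order all_algebra.
From mathcomp Require Import all_classical all_reals all_analysis.
Set Implicit Arguments. Unset Strict Implicit. Unset Printing Implicit Defensive.
Import Order.TTheory GRing.Theory Num.Theory.
Import numFieldNormedType.Exports.
Local Open Scope ring_scope.

Section Shotgun.
Variable R : realType.

Definition dupmx n d (A : 'M[R]_(n, d)) : 'M[R]_(n, d + d) := row_mx A (- A).

Definition lassoF n d (A : 'M[R]_(n, d)) (L : R -> R -> R) (y : 'I_n -> R)
  (lam : R) (x : 'cV[R]_(d + d)) : R :=
  \sum_(i < n) L ((dupmx A *m x) i ord0) (y i) + lam * \sum_(j < d + d) x j ord0.

Definition gradF m (F : 'cV[R]_m -> R) (x : 'cV[R]_m) : 'cV[R]_m :=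
  \col_(j < m) derive1 (fun t : R => F (x + t *: delta_mx j ord0)) 0.

Definition nonneg_vec m (x : 'cV[R]_m) : Prop := forall j, 0 <= x j ord0.

(* spectral radius = max |eigenvalue| (eigenvalues in R; the matrix used is
   symmetric, so all its eigenvalues are real) *)
Definition is_spectral_radius m (M : 'M[R]_m) (rho : R) : Prop :=
  (exists a, eigenvalue M a /\ `|a| = rho) /\
  (forall a, eigenvalue M a -> `|a| <= rho).

Definition shoot m (F : 'cV[R]_m -> R) (beta : R) (x : 'cV[R]_m) (j : 'I_m) : R :=
  Num.max (- x j ord0) (- (gradF F x) j ord0 / beta).

Definition collective m P (F : 'cV[R]_m -> R) (beta : R) (x : 'cV[R]_m)
  (s : {ffun 'I_P -> 'I_m}) : 'cV[R]_m :=
  \col_(k < m) \sum_(p < P | s p == k) shoot F beta x (s p).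

End Shotgun.

From HB Require Import structures.
From mathcomp Require Import all_boot all_order all_algebra.
From mathcomp Require Import all_classical all_reals all_analysis.
From mathcomp Require Import ring lra.

(* Bound [F (x + Δx)] by its quadratic model, with [M := Â^T Â], and average
   over the [P] uniform draws.  The linear part contributes [P] times the mean of [δx_j ∇_j F].  In
   [Δx^T M Δx] the [P] diagonal terms give [P |δx|^2 / 2d] since [M] has unit
   diagonal, while each of the [P (P - 1)] pairs of distinct draws is a pair of
   independent uniform indices, with mean [δx^T M δx / (2d)^2]; this is at most
   [ρ |δx|^2 / (2d)^2] because the Rayleigh quotient of the symmetric matrix [M]
   is maximised at an eigenvector. *)

Set Implicit Arguments.
Unset Strict Implicit.
Unset Printing Implicit Defensive.
Import Order.TTheory GRing.Theory Num.Theory.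
Import numFieldNormedType.Exports.
Local Open Scope ring_scope.

Lemma linear_coef_eq0 (R : realFieldType) (a b : R) :
  (forall t, 0 <= t ^+ 2 * a - 2 * t * b) -> b = 0.
Proof.
move=> ge0; have a1 : 0 < `|a| + 1 by rewrite ltr_wpDl.
set t := b / (`|a| + 1).
have bE : b = t * (`|a| + 1) by rewrite /t divfK // gt_eqF.
have := ge0 t; rewrite bE => quad_ge0.
have t2 := sqr_ge0 t; have a_le := ler_norm a.
suff -> : t = 0 by rewrite mul0r.
apply/eqP; rewrite -sqrf_eq0 eq_le t2 andbT; nra.
Qed.

Lemma continuous_sum (R : realType) (T : topologicalType) (I : Type) (s : seq I)
    (f : I -> T -> R) :
  (forall i, continuous (f i)) -> continuous (fun v => \sum_(i <- s) f i v).
Proof.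
move=> fc; elim: s => [|i s IH] x.
  by under eq_fun do rewrite big_nil; exact: cst_continuous.
under eq_fun do rewrite big_cons.
exact: (@continuousD R R^o _ (f i) (fun v => \sum_(j <- s) f j v) x (fc i x) (IH x)).
Qed.

Section BilinearForm.
Variables (R : realType) (m : nat).
Implicit Types (M : 'M[R]_m) (u v w : 'rV[R]_m).

Definition bform M u w : R := (u *m M *m w^T) 0 0.

Local Notation sqnorm v := (bform 1%:M v v).

Lemma bformDl M u v w : bform M (u + v) w = bform M u w + bform M v w.
Proof. by rewrite /bform !mulmxDl mxE. Qed.

Lemma bformDr M u v w : bform M w (u + v) = bform M w u + bform M w v.
Proof. by rewrite /bform raddfD /= mulmxDr mxE. Qed.

Lemma bformZl M t u w : bform M (t *: u) w = t * bform M u w.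
Proof. by rewrite /bform -!scalemxAl mxE. Qed.

Lemma bformZr M t u w : bform M w (t *: u) = t * bform M w u.
Proof. by rewrite /bform linearZ /= -scalemxAr mxE. Qed.

Lemma bform0 M : bform M 0 0 = 0.
Proof. by rewrite /bform !mul0mx mxE. Qed.

Lemma bformC M u w : M^T = M -> bform M u w = bform M w u.
Proof.
move=> sM; rewrite /bform -[in LHS](trmxK (u *m M *m w^T)) mxE.
by rewrite !trmx_mul trmxK sM mulmxA.
Qed.

Lemma bform_mulmx M u w : bform M u w = bform 1%:M (u *m M) w.
Proof. by rewrite /bform mulmx1. Qed.

Lemma sqnormE v : sqnorm v = \sum_j v 0 j ^+ 2.
Proof. by rewrite /bform mulmx1 mxE; apply: eq_bigr => j _; rewrite mxE expr2. Qed.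

Lemma sqnorm_ge0 v : 0 <= sqnorm v.
Proof. by rewrite sqnormE sumr_ge0 // => j _; rewrite sqr_ge0. Qed.

Lemma sqnorm_eq0 v : (sqnorm v == 0) = (v == 0).
Proof.
apply/idP/eqP => [|->]; last by rewrite bform0.
rewrite sqnormE psumr_eq0 => [/allP v0|j _]; last by rewrite sqr_ge0.
apply/rowP => j; rewrite mxE; apply/eqP; rewrite -sqrf_eq0.
by have := v0 j; rewrite mem_index_enum => /(_ isT).
Qed.

Lemma bform_continuous M : continuous (fun v : 'rV[R]_m => bform M v v).
Proof.
rewrite /bform; under eq_fun do rewrite mxE.
apply: continuous_sum => j; under eq_fun do rewrite !mxE.
move=> x; apply: continuousM; last exact: coord_continuous.
apply: continuous_sum => i z; apply: continuousM; first exact: coord_continuous.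
exact: cst_continuous.
Qed.

Lemma unit_sphere_compact : compact [set u : 'rV[R]_m | sqnorm u = 1]%classic.
Proof.
apply: bounded_closed_compact.
  exists 1; split => // r r1 u /= u1.
  rewrite [X in X <= _]/Num.norm /= mx_normrE.
  apply: bigmax_le => [|[i j] _ /=]; first exact: le_trans (ltW r1).
  have uj1 : u i j ^+ 2 <= 1.
    by rewrite -u1 sqnormE ord1 (bigD1 j) //= lerDl sumr_ge0 // => k _; rewrite sqr_ge0.
  apply: le_trans (ltW r1); rewrite ler_norml; apply/andP; split; nra.
apply: (@preimage_closed _ _ (fun u => sqnorm u) [set 1]%classic); last exact: closed_eq.
by move=> u _; apply: bform_continuous.
Qed.

Lemma bform_normalize M v : v != 0 ->
  let w := (Num.sqrt (sqnorm v))^-1 *: v in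
  sqnorm w = 1 /\ bform M v v = sqnorm v * bform M w w.
Proof.
move=> v0 w; have n0 : 0 < sqnorm v by rewrite lt_def sqnorm_eq0 v0 sqnorm_ge0.
rewrite /w; set r := Num.sqrt _.
have rr : sqnorm v = r ^+ 2 by rewrite sqr_sqrtr // ltW.
have r0 : r != 0 by rewrite gt_eqF // sqrtr_gt0.
by rewrite !bformZl !bformZr rr; split; field.
Qed.

Lemma exists_rayleigh_max M : (exists v : 'rV[R]_m, v != 0) ->
  exists2 c, sqnorm c = 1 & forall u, bform M u u <= bform M c c * sqnorm u.
Proof.
case=> v v0; have sphere0 : ([set u : 'rV[R]_m | sqnorm u = 1] !=set0)%classic.
  by exists ((Num.sqrt (sqnorm v))^-1 *: v); case: (bform_normalize M v0).
have [c c1 cmax] := compact_EVT_max sphere0 unit_sphere_compact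
  (continuous_subspaceT (@bform_continuous M)).
exists c => [|u]; first by move: c1; rewrite inE.
have [->|u0] := eqVneq u 0; first by rewrite !bform0 mulr0.
have [w1 ->] := bform_normalize M u0.
by rewrite mulrC ler_wpM2r ?sqnorm_ge0 // cmax // inE.
Qed.

(* First-order optimality: perturbing [c] along [e := c M - l c] changes the
   quotient at rate [-2 |e|^2], which must vanish at a maximum. *)
Lemma rayleigh_max_eigenvector M c : M^T = M -> sqnorm c = 1 ->
  (forall u, bform M u u <= bform M c c * sqnorm u) ->
  c *m M = bform M c c *: c.
Proof.
move=> sM c1 cmax; set l := bform M c c.
have [e eE] : {e | c *m M = e + l *: c} by exists (c *m M - l *: c); rewrite subrK.
have eM : bform M c e = sqnorm e + l * bform 1%:M c e.
  by rewrite bform_mulmx eE bformDl bformZl bformC ?trmx1.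
suff /eqP : sqnorm e = 0 by rewrite sqnorm_eq0 eE => /eqP->; rewrite add0r.
apply: (@linear_coef_eq0 _ (l * sqnorm e - bform M e e)) => t.
have := cmax (c + t *: e).
rewrite !(bformDl, bformDr, bformZl, bformZr) (bformC e c sM) (bformC e c (trmx1 _ _)).
rewrite -/l c1 eM; lra.
Qed.

Lemma bform_le_spectral_radius M rho : M^T = M ->
  (forall a, eigenvalue M a -> `|a| <= rho) ->
  forall v, bform M v v <= rho * sqnorm v.
Proof.
move=> sM eig_le v; have [->|v0] := eqVneq v 0; first by rewrite !bform0 mulr0.
have [c c1 cmax] := exists_rayleigh_max M (ex_intro _ v v0).
have eig_c : eigenvalue M (bform M c c).
  apply/eigenvalueP; exists c; first by apply/eqP; rewrite rayleigh_max_eigenvector.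
  by rewrite -sqnorm_eq0 c1 oner_eq0.
apply: le_trans (cmax v) _; rewrite ler_wpM2r ?sqnorm_ge0 //.
exact: le_trans (ler_norm _) (eig_le _ eig_c).
Qed.

End BilinearForm.

Section UniformDraws.
Variables (R : realType) (P m : nat).
Local Notation draws := {ffun 'I_P -> 'I_m}.

Lemma natr_exp_prod : m%:R ^+ P = \prod_(i < P) (m%:R : R).
Proof. by rewrite prodr_const card_ord. Qed.

Lemma sum_ffun_eval (p : 'I_P) (h : 'I_m -> R) :
  m%:R * \sum_(s : draws) h (s p) = m%:R ^+ P * \sum_j h j.
Proof.
pose F i j := if i == p then h j else 1.
have -> : \sum_(s : draws) h (s p) = \sum_(s : draws) \prod_i F i (s i).
  apply: eq_bigr => s _; rewrite (bigD1 p) //= big1 ?mulr1 => [|i /negbTE ip].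
    by rewrite /F eqxx.
  by rewrite /F ip.
rewrite -bigA_distr_bigA natr_exp_prod (bigD1 p) //= [in RHS](bigD1 p) //=.
have -> : \prod_(i | i != p) \sum_j F i j = \prod_(i | i != p) (m%:R : R).
  by apply: eq_bigr => i /negbTE ip; rewrite /F ip sumr_const card_ord.
rewrite /F eqxx; ring.
Qed.

Lemma sum_ffun_eval2 (p q : 'I_P) (H : 'I_m -> 'I_m -> R) : p != q ->
  m%:R ^+ 2 * \sum_(s : draws) H (s p) (s q) = m%:R ^+ P * \sum_j \sum_k H j k.
Proof.
move=> pq; have qp : (q == p) = false by rewrite eq_sym (negbTE pq).
have prod2 (G : 'I_P -> R) :
    \prod_i G i = G p * (G q * \prod_(i | (i != p) && (i != q)) G i).
  by rewrite (bigD1 p) //= (bigD1 q) //= eq_sym.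
pose F j i l : R := if i == p then (if l == j then 1 else 0)
                    else if i == q then H j l else 1.
have pin j (s : draws) :
    \prod_i F j i (s i) = (if s p == j then 1 else 0) * H j (s q).
  rewrite prod2 big1 ?mulr1 => [|i /andP[/negbTE ip /negbTE iq]]; last by rewrite /F ip iq.
  by rewrite /F eqxx qp eqxx.
have -> : \sum_(s : draws) H (s p) (s q) = \sum_j \sum_(s : draws) \prod_i F j i (s i).
  rewrite exchange_big; apply: eq_bigr => s _ /=; under eq_bigr do rewrite pin.
  rewrite (bigD1 (s p)) //= eqxx mul1r big1 ?addr0 // => j /negbTE.
  by rewrite eq_sym => ->; rewrite mul0r.
rewrite mulr_sumr [in RHS]mulr_sumr; apply: eq_bigr => j _.
rewrite -bigA_distr_bigA natr_exp_prod prod2 [in RHS]prod2.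
have -> : \prod_(i | (i != p) && (i != q)) \sum_l F j i l
    = \prod_(i | (i != p) && (i != q)) (m%:R : R).
  apply: eq_bigr => i /andP[/negbTE ip /negbTE iq].
  by rewrite /F ip iq sumr_const card_ord.
rewrite /F eqxx qp eqxx -big_mkcond big_pred1_eq; ring.
Qed.

Lemma sumr_neq_const (p : 'I_P) (c : R) : \sum_(q | q != p) c = (P%:R - 1) * c.
Proof.
have sum_split : \sum_(q < P) c = c + \sum_(q < P | q != p) c by rewrite (bigD1 p).
apply: (addrI c); rewrite -sum_split sumr_const card_ord.
by rewrite mulrBl mul1r mulr_natl addrC subrK.
Qed.

End UniformDraws.

Section Scatter.
Variables (R : realType) (m P : nat) (w : 'I_m -> R).
Local Notation draws := {ffun 'I_P -> 'I_m}.

Definition scatter (s : draws) : 'cV[R]_m :=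
  \col_(k < m) \sum_(p < P | s p == k) w (s p).

Lemma scatter_dot s (h : 'I_m -> R) :
  \sum_k scatter s k 0 * h k = \sum_p w (s p) * h (s p).
Proof.
under eq_bigr do rewrite mxE big_distrl /= big_mkcond /=.
rewrite exchange_big; apply: eq_bigr => p _.
by rewrite -big_mkcond /= (big_pred1 (s p)) // => k; rewrite eq_sym.
Qed.

Lemma scatter_vdot s (g : 'cV[R]_m) :
  ((scatter s)^T *m g) 0 0 = \sum_p w (s p) * g (s p) 0.
Proof.
rewrite mxE -(scatter_dot s (fun k => g k 0)).
by apply: eq_bigr => k _; rewrite mxE.
Qed.

Lemma scatter_qform s (M : 'M[R]_m) :
  ((scatter s)^T *m M *m scatter s) 0 0
  = \sum_p \sum_q w (s p) * w (s q) * M (s p) (s q).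
Proof.
have row_sM l : ((scatter s)^T *m M) 0 l = \sum_p w (s p) * M (s p) l.
  rewrite mxE -(scatter_dot s (fun k => M k l)).
  by apply: eq_bigr => k _; rewrite mxE.
rewrite mxE; under eq_bigr do rewrite row_sM big_distrl /=.
rewrite exchange_big; apply: eq_bigr => p _.
under eq_bigr do rewrite mulrC.
by rewrite scatter_dot; apply: eq_bigr => q _; rewrite mulrCA mulrA.
Qed.

Lemma sum_scatter_vdot (g : 'cV[R]_m) :
  m%:R * \sum_(s : draws) ((scatter s)^T *m g) 0 0
  = m%:R ^+ P * (P%:R * \sum_j w j * g j 0).
Proof.
under eq_bigr do rewrite scatter_vdot; rewrite exchange_big [LHS]mulr_sumr /=.
rewrite (eq_bigr (fun=> m%:R ^+ P * \sum_j w j * g j 0)); last first.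
  by move=> p _; exact: (sum_ffun_eval p (fun j => w j * g j 0)).
by rewrite sumr_const card_ord -(mulr_natl _ P); ring.
Qed.

Lemma sum_scatter_qform (M : 'M[R]_m) :
  m%:R ^+ 2 * \sum_(s : draws) ((scatter s)^T *m M *m scatter s) 0 0
  = m%:R ^+ P * (P%:R * m%:R * \sum_j w j ^+ 2 * M j j
                 + P%:R * (P%:R - 1) * \sum_j \sum_k w j * w k * M j k).
Proof.
under eq_bigr do rewrite scatter_qform; rewrite exchange_big [LHS]mulr_sumr /=.
transitivity (\sum_(p < P) m%:R ^+ P * (m%:R * \sum_j w j ^+ 2 * M j j
    + (P%:R - 1) * \sum_j \sum_k w j * w k * M j k)).
  apply: eq_bigr => p _; rewrite exchange_big (bigD1 p) //= mulrDr mulrDr.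
  congr (_ + _).
    rewrite expr2 -mulrA (sum_ffun_eval p (fun j => w j ^+ 2 * M j j)).
    by rewrite mulrCA.
  rewrite mulr_sumr (eq_bigr (fun=> m%:R ^+ P * \sum_j \sum_k w j * w k * M j k)).
    by rewrite sumr_neq_const mulrCA.
  move=> q qp; rewrite (sum_ffun_eval2 (fun j k => w j * w k * M j k)) //.
  by rewrite eq_sym.
by rewrite sumr_const card_ord -(mulr_natl _ P); ring.
Qed.

End Scatter.

Section DuplicatedDesign.
Variables (R : realType) (n d : nat) (A : 'M[R]_(n, d)).

Lemma dupmx_gram : (dupmx A)^T *m dupmx A
  = block_mx (A^T *m A) (- (A^T *m A)) (- (A^T *m A)) (A^T *m A).
Proof.
by rewrite /dupmx tr_row_mx mul_col_row !raddfN /= ?mulNmx ?mulmxN ?opprK.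
Qed.

Lemma dupmx_gram_diag (c : R) : (forall j, (A^T *m A) j j = c) ->
  forall j, ((dupmx A)^T *m dupmx A) j j = c.
Proof.
by move=> Gc j; rewrite dupmx_gram; case: (split_ordP j) => k ->;
  rewrite ?block_mxEul ?block_mxEdr.
Qed.

End DuplicatedDesign.

Section ExpectedUpdate.
Variables (R : realType) (m P : nat) (w : 'I_m -> R) (g : 'cV[R]_m).
Variables (M : 'M[R]_m) (beta rho : R).
Hypotheses (M_sym : M^T = M) (M_diag : forall j, M j j = 1)
  (M_spec : forall a, eigenvalue M a -> `|a| <= rho) (beta_ge0 : 0 <= beta).

Lemma scatter_pairs_le : \sum_j \sum_k w j * w k * M j k <= rho * \sum_j w j ^+ 2.
Proof.
set v := \row_j w j.
have vv : bform 1%:M v v = \sum_j w j ^+ 2.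
  by rewrite sqnormE; apply: eq_bigr => j _; rewrite mxE.
have vMv : bform M v v = \sum_j \sum_k w j * w k * M j k.
  rewrite /bform mxE exchange_big; apply: eq_bigr => k _ /=.
  by rewrite !mxE big_distrl; apply: eq_bigr => j _; rewrite !mxE /= mulrAC.
by have := bform_le_spectral_radius M_sym M_spec v; rewrite vv vMv.
Qed.

Lemma mean_scatter_model_le : (0 < m)%N ->
  (\sum_(s : {ffun 'I_P -> 'I_m})
      (((scatter w s)^T *m g) 0 0
       + beta / 2 * ((scatter w s)^T *m M *m scatter w s) 0 0)) / m%:R ^+ P
  <= P%:R * ((\sum_j (w j * g j 0
       + beta / 2 * (1 + (P%:R - 1) * rho / m%:R) * w j ^+ 2)) / m%:R).
Proof.
move=> m_gt0; have m0 : m%:R != 0 :> R by rewrite pnatr_eq0 -lt0n.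
have mP0 : m%:R ^+ P != 0 :> R by rewrite expf_neq0.
set G := \sum_j w j * g j 0; set Q := \sum_j w j ^+ 2.
set Mq := \sum_j \sum_k w j * w k * M j k.
have lin : \sum_(s : {ffun 'I_P -> 'I_m}) ((scatter w s)^T *m g) 0 0
    = m%:R ^+ P * (P%:R * G) / m%:R.
  by apply: (mulfI m0); rewrite sum_scatter_vdot -/G; field.
have quad : \sum_(s : {ffun 'I_P -> 'I_m}) ((scatter w s)^T *m M *m scatter w s) 0 0
    = m%:R ^+ P * (P%:R * m%:R * Q + P%:R * (P%:R - 1) * Mq) / m%:R ^+ 2.
  apply: (mulfI (expf_neq0 2 m0)); rewrite sum_scatter_qform.
  by under eq_bigr do rewrite M_diag mulr1; rewrite -/Q -/Mq; field.
rewrite big_split /= -mulr_sumr lin quad big_split /= -mulr_sumr -subr_ge0.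
have PP1 : 0 <= P%:R * (P%:R - 1) :> R.
  by case: P => [|k]; rewrite ?mul0r // -natr1 addrK mulr_ge0.
have -> : P%:R * ((G + beta / 2 * (1 + (P%:R - 1) * rho / m%:R) * Q) / m%:R)
      - (m%:R ^+ P * (P%:R * G) / m%:R
         + beta / 2 * (m%:R ^+ P * (P%:R * m%:R * Q + P%:R * (P%:R - 1) * Mq)
                       / m%:R ^+ 2)) / m%:R ^+ P
    = beta / 2 * (P%:R * (P%:R - 1)) * (rho * Q - Mq) / m%:R ^+ 2.
  by field; rewrite m0 mP0.
apply: divr_ge0; last by rewrite exprn_ge0 ?ler0n.
apply: mulr_ge0; last by rewrite subr_ge0; exact: scatter_pairs_le.
by rewrite mulr_ge0 ?divr_ge0.
Qed.

End ExpectedUpdate.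

Lemma collectiveE (R : realType) m P (F : 'cV[R]_m -> R) (beta : R) (x : 'cV[R]_m)
    (s : {ffun 'I_P -> 'I_m}) :
  collective F beta x s = scatter (shoot F beta x) s.
Proof. by []. Qed.

Theorem lemma3p3 (R : realType) (n d : nat) (A : 'M[R]_(n, d))
  (y : 'I_n -> R) (lam : R) (L : R -> R -> R) (beta rho : R) (P : nat)
  (x : 'cV[R]_(d + d)) :
  (forall j : 'I_d, (A^T *m A) j j = 1) ->
  0 <= lam ->
  (forall u v, 0 <= L u v) ->
  (forall v u1 u2 (t : R), 0 <= t <= 1 ->
     L (t * u1 + (1 - t) * u2) v <= t * L u1 v + (1 - t) * L u2 v) ->
  (forall v u, derivable (fun t => L t v) u 1) ->
  (forall u w (t : R), nonneg_vec u -> nonneg_vec w -> 0 <= t <= 1 ->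
     lassoF A L y lam (t *: u + (1 - t) *: w)
       <= t * lassoF A L y lam u + (1 - t) * lassoF A L y lam w) ->
  0 < beta ->
  (forall u du, nonneg_vec u -> nonneg_vec (u + du) ->
     lassoF A L y lam (u + du)
       <= lassoF A L y lam u + (du^T *m gradF (lassoF A L y lam) u) ord0 ord0
          + beta / 2 * (du^T *m ((dupmx A)^T *m dupmx A) *m du) ord0 ord0) ->
  is_spectral_radius ((dupmx A)^T *m dupmx A) rho ->
  (0 < P)%N ->
  P%:R < (d + d)%:R / rho + 1 ->
  nonneg_vec x ->
  (forall s : {ffun 'I_P -> 'I_(d + d)},
     nonneg_vec (x + collective (lassoF A L y lam) beta x s)) ->
  (\sum_(s : {ffun 'I_P -> 'I_(d + d)})
      (lassoF A L y lam (x + collective (lassoF A L y lam) beta x s)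
         - lassoF A L y lam x)) / ((d + d)%:R ^+ P)
  <= P%:R * ((\sum_(j < d + d)
        (shoot (lassoF A L y lam) beta x j * gradF (lassoF A L y lam) x j ord0
         + beta / 2 * (1 + (P%:R - 1) * rho / (d + d)%:R)
             * (shoot (lassoF A L y lam) beta x j) ^+ 2)) / (d + d)%:R).
Proof.
move=> A_diag _ _ _ _ _ beta_gt0 smooth [_ M_spec] P_gt0 _ x_ge0 update_ge0.
set F := lassoF A L y lam; set M := (dupmx A)^T *m dupmx A.
have [m0|m_gt0] := posnP (d + d).
  have no_index (j : 'I_(d + d)) : False by case: j => k; rewrite m0.
  rewrite big1 => [|s _]; last by case: (no_index (s (Ordinal P_gt0))).
  by rewrite mul0r big1 ?mul0r ?mulr0 // => j; case: (no_index j).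
have M_sym : M^T = M by rewrite /M trmx_mul trmxK.
apply: le_trans _ (mean_scatter_model_le P (shoot F beta x) (gradF F x) M_sym
  (dupmx_gram_diag A_diag) M_spec (ltW beta_gt0) m_gt0).
rewrite ler_wpM2r ?invr_ge0 ?exprn_ge0 ?ler0n // ler_sum // => s _.
by rewrite lerBlDl addrA -collectiveE smooth.
Qed.
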